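(* Let $m\ge0$, let $f:\mathbb{R}^n\to\mathbb{R}$ be $m$-weakly convex, and consider one call of the subroutine ProxDescent$(x_k,\beta,\rho)$ (defined in the context) with $\beta\in(0,1)$, $\rho>0$, $\alpha=m+\rho$. Let $\Delta_k:=f(x_k)-f_\alpha(x_k)$ and assume $\Delta_k>0$. Then the while-loop terminates after finitely many steps, and the number $T_k$ of trial points computed satisfies $$T_k\le\frac{8G_k^2}{(1-\beta)^2\rho\,\Delta_k},\qquad\text{where } G_k=\max_{1\le j\le T_k}\|g_j\|.$$
   Context: A function $f$ is $m$-weakly convex ($m\ge 0$) if $x\mapsto f(x)+\frac{m}{2}\|x\|^2$ is convex; its subdifferential is $\partial f(x)=\{v: f(y)\ge f(x)+\langle v,y-x\rangle-\frac{m}{2}\|y-x\|^2\ \forall y\}$. For $\alpha>m$, $f_\alpha(x)=\inf_y\{f(y)+\frac\alpha2\|y-x\|^2\}$ (Moreau envelope). Subroutine ProxDescent$(x_k,\beta,\rho)$: set $j=1$, choose $g_1\in\partial f(x_k)$, let $\tilde f_1(x)=f(x_k)+\langle g_1,x-x_k\rangle$, and compute $z_2=\arg\min_x\{\tilde f_1(x)+\frac\rho2\|x-x_k\|^2\}$. While $f(x_k)-\big(f(z_{j+1})+\frac m2\|z_{j+1}-x_k\|^2\big)<\beta\big(f(x_k)-\tilde f_j(z_{j+1})\big)$: choose $g_{j+1}$ with $g_{j+1}-m(z_{j+1}-x_k)\in\partial f(z_{j+1})$ and a convex $\tilde f_{j+1}:\mathbb{R}^n\to\mathbb{R}$ such that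 for all $x$: (i) $\tilde f_{j+1}(x)\le f(x)+\frac m2\|x-x_k\|^2$; (ii) $\tilde f_{j+1}(x)\ge\tilde f_j(z_{j+1})+\langle s_{j+1},x-z_{j+1}\rangle$ with $s_{j+1}=\rho(x_k-z_{j+1})$; (iii) $\tilde f_{j+1}(x)\ge f(z_{j+1})+\frac m2\|z_{j+1}-x_k\|^2+\langle g_{j+1},x-z_{j+1}\rangle$; compute $z_{j+2}=\arg\min_x\{\tilde f_{j+1}(x)+\frac\rho2\|x-x_k\|^2\}$ and increase $j$ by one. On exit, return $z_{j+1}$. $T_k$ denotes the number of trial points $z_2,\dots,z_{T_k+1}$ computed in the call (equivalently the number of vectors $g_1,\dots,g_{T_k}$ used). *)

From HB Require Import structures.
From mathcomp Require Import all_boot all_order all_algebra.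
From mathcomp Require Import all_classical all_reals.
Set Implicit Arguments. Unset Strict Implicit. Unset Printing Implicit Defensive.
Import Order.TTheory GRing.Theory Num.Theory.
Local Open Scope ring_scope.
Local Open Scope classical_set_scope.

Section Defs.
Variables (R : realType) (n : nat).
Notation V := 'rV[R]_n.

Definition dotp (u v : V) : R := \sum_(i < n) u ord0 i * v ord0 i.
Definition nrm (u : V) : R := Num.sqrt (dotp u u).

Definition convex_fun (h : V -> R) : Prop :=
  forall (x y : V) (t : R), 0 <= t <= 1 ->
    h (t *: x + (1 - t) *: y) <= t * h x + (1 - t) * h y.

Definition weakly_convex (m : R) (f : V -> R) : Prop :=
  convex_fun (fun x => f x + m / 2 * nrm x ^+ 2).

Definition subdiff (m : R) (f : V -> R) (x v : V) : Prop :=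
  forall y, f x + dotp v (y - x) - m / 2 * nrm (y - x) ^+ 2 <= f y.

Definition moreau (f : V -> R) (alpha : R) (x : V) : R :=
  inf [set f y + alpha / 2 * nrm (y - x) ^+ 2 | y in [set: V]].

Definition is_prox_min (F : V -> R) (rho : R) (xk z : V) : Prop :=
  forall x, F z + rho / 2 * nrm (z - xk) ^+ 2 <= F x + rho / 2 * nrm (x - xk) ^+ 2.

Definition loop_cont (f : V -> R) (m beta : R) (xk : V)
    (ft : nat -> V -> R) (z : nat -> V) (j : nat) : Prop :=
  f xk - (f (z j.+1) + m / 2 * nrm (z j.+1 - xk) ^+ 2)
    < beta * (f xk - ft j (z j.+1)).

(* (g, ft, z) is a (possibly infinite) execution of ProxDescent(xk, beta, rho):
   the choices at step j+1 are constrained only while the loop is still running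
   (the loop condition held at every index 1..j). *)
Definition prox_descent_run (f : V -> R) (m beta rho : R) (xk : V)
    (g : nat -> V) (ft : nat -> V -> R) (z : nat -> V) : Prop :=
  [/\ subdiff m f xk (g 1%N),
      (forall x, ft 1%N x = f xk + dotp (g 1%N) (x - xk)),
      is_prox_min (ft 1%N) rho xk (z 2%N) &
      forall j : nat, (1 <= j)%N ->
        (forall i : nat, (1 <= i <= j)%N -> loop_cont f m beta xk ft z i) ->
        subdiff m f (z j.+1) (g j.+1 - m *: (z j.+1 - xk)) /\
        convex_fun (ft j.+1) /\
        (forall x, ft j.+1 x <= f x + m / 2 * nrm (x - xk) ^+ 2) /\
        (forall x, ft j (z j.+1) + dotp (rho *: (xk - z j.+1)) (x - z j.+1)
                     <= ft j.+1 x) /\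
        (forall x, f (z j.+1) + m / 2 * nrm (z j.+1 - xk) ^+ 2
                     + dotp (g j.+1) (x - z j.+1) <= ft j.+1 x) /\
        is_prox_min (ft j.+1) rho xk (z j.+2)].

End Defs.

From HB Require Import structures.
From mathcomp Require Import all_boot all_order all_algebra.
From mathcomp Require Import all_classical all_reals.
From mathcomp Require Import ring lra.
Import Order.TTheory GRing.Theory Num.Theory.
Local Open Scope ring_scope.

(* Write v_j for the optimal value of the j-th prox subproblem
   min_x ft_j x + rho/2 ||x - xk||^2, attained at z_{j+1}, and gap_j := f xk - v_j.
   The models minorize f + m/2 ||. - xk||^2, so v_j is at most the Moreau envelope
   and gap_j >= Delta_k; since v_j is nondecreasing and v_1 is explicit,
   2 rho gap_j <= ||g_1||^2.  While the loop runs, the model error at z_{j+1}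
   exceeds (1 - beta) gap_j, and the combination (1 - l) (ii) + l (iii) of the two
   new cuts, optimized in l, gives
     gap_{j+1} <= gap_j - (1 - beta)^2 rho gap_j^2 / (8 G^2),
   whence j gap_j <= 8 G^2 / ((1 - beta)^2 rho).  The loop terminates since all
   trial points lie in a fixed ball around xk, on which the weak subgradients are
   bounded, so that this bound cannot hold for every j. *)

Section Euclidean.
Context {R : realType} {n : nat}.
Notation V := 'rV[R]_n.
Implicit Types (u v w x y : V).

Lemma dotpDl u v w : dotp (u + v) w = dotp u w + dotp v w.
Proof. by rewrite /dotp -big_split; apply: eq_bigr => i _; rewrite mxE mulrDl. Qed.

Lemma dotpZl (a : R) u w : dotp (a *: u) w = a * dotp u w.
Proof. by rewrite /dotp mulr_sumr; apply: eq_bigr => i _; rewrite mxE mulrA. Qed.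

Lemma dotpNl u w : dotp (- u) w = - dotp u w.
Proof. by rewrite -scaleN1r dotpZl mulN1r. Qed.

Lemma dotpC u w : dotp u w = dotp w u.
Proof. by apply: eq_bigr => i _; rewrite mulrC. Qed.

Lemma dotpDr u v w : dotp w (u + v) = dotp w u + dotp w v.
Proof. by rewrite dotpC dotpDl !(dotpC w). Qed.

Lemma dotpZr (a : R) u w : dotp w (a *: u) = a * dotp w u.
Proof. by rewrite dotpC dotpZl dotpC. Qed.

Lemma dotpNr u w : dotp w (- u) = - dotp w u.
Proof. by rewrite dotpC dotpNl dotpC. Qed.

Definition dotpE := (dotpDl, dotpDr, dotpNl, dotpNr, dotpZl, dotpZr).

Lemma dotpNN u : dotp (- u) (- u) = dotp u u.
Proof. by rewrite dotpNl dotpNr opprK. Qed.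

Lemma dotpDD u v : dotp (u + v) (u + v) = dotp u u + 2 * dotp u v + dotp v v.
Proof. by rewrite !dotpE (dotpC v u); ring. Qed.

Lemma dotp_ge0 u : 0 <= dotp u u.
Proof. by apply: sumr_ge0 => i _; rewrite -expr2 sqr_ge0. Qed.

Lemma dotp00 : dotp (0 : V) 0 = 0.
Proof. by rewrite -[0 : V](scale0r 0) dotpZl mul0r. Qed.

Lemma nrm_ge0 u : 0 <= nrm u.
Proof. exact: sqrtr_ge0. Qed.

Lemma nrm2 u : nrm u ^+ 2 = dotp u u.
Proof. by rewrite sqr_sqrtr // dotp_ge0. Qed.

Lemma dotp_le_sqr u (G : R) : nrm u <= G -> dotp u u <= G ^+ 2.
Proof.
by move=> uG; rewrite -nrm2; have := nrm_ge0 u; nra.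
Qed.

Lemma dotpDD_le u v : dotp (u + v) (u + v) <= 2 * dotp u u + 2 * dotp v v.
Proof. by have := dotp_ge0 (u - v); rewrite !dotpDD dotpNr dotpNN => ?; lra. Qed.

Lemma dotp_ge_sqr u v : - (dotp u u + dotp v v) / 2 <= dotp u v.
Proof. by have := dotp_ge0 (u + v); rewrite dotpDD => ?; lra. Qed.

Lemma dotp_young (w d : V) (l rho : R) : 0 < rho ->
  - (l ^+ 2 * (dotp w w / (2 * rho))) <= l * dotp w d + rho / 2 * dotp d d.
Proof.
move=> rho0; set X := dotp w w / _.
have wX : dotp w w = 2 * rho * X by rewrite /X; field; lra.
by have := dotp_ge0 (l *: w + rho *: d); rewrite dotpDD !dotpE wX => ?; nra.
Qed.

End Euclidean.

Section Scalar.
Context {R : realType}.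

Lemma linear_quadratic_ge0 (A B : R) : 0 <= B ->
  (forall t, 0 < t <= 1 -> 0 <= t * A + t ^+ 2 * B) -> 0 <= A.
Proof.
move=> B0 H; rewrite leNgt; apply/negP => A0.
pose t := Num.min 1 (- A / (2 * B + 1)).
have t0 : 0 < t by rewrite lt_min ltr01 divr_gt0 //; lra.
have t1 : t <= 1 by rewrite ge_min lexx.
have tA : t * (2 * B + 1) <= - A by rewrite -ler_pdivlMr ?ge_min ?lexx ?orbT //; lra.
by have := H t; rewrite t0 t1 => /(_ isT); nra.
Qed.

Lemma concave_quadratic_max_le (A B D : R) : 0 < B -> 0 <= A <= 2 * B ->
  (forall l, 0 <= l <= 1 -> l * A - l ^+ 2 * B <= D) -> A ^+ 2 / (4 * B) <= D.
Proof.
move=> B0 /andP[A0 AB] H.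
have l0 : 0 <= A / (2 * B) by rewrite divr_ge0 //; lra.
have l1 : A / (2 * B) <= 1 by rewrite ler_pdivrMr; lra.
have := H _ (introT andP (conj l0 l1)).
suff -> : A / (2 * B) * A - (A / (2 * B)) ^+ 2 * B = A ^+ 2 / (4 * B) by [].
by field; lra.
Qed.

Lemma sqr_decay_bound (a : nat -> R) (c : R) (T : nat) : 0 <= c ->
  (forall j, (1 <= j <= T)%N -> 0 <= c * a j <= 1) ->
  (forall j, (1 <= j < T)%N -> a j.+1 <= a j - c * a j ^+ 2) ->
  T%:R * (c * a T) <= 1.
Proof.
move=> c0 ab dec; case: T ab dec => [|T] ab dec; first by rewrite mul0r.
suff : forall j, (j <= T)%N -> j.+1%:R * (c * a j.+1) <= 1 by apply.
elim=> [|j IH] jT; first by rewrite mul1r; case/andP: (ab 1%N isT).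
have /andP[b0 b1] := ab j.+1 (ltnW jT).
have /andP[b'0 _] := ab j.+2 jT.
have := dec j.+1 jT; have := IH (ltnW jT).
rewrite -!natr1 => hj hdec.
have hb' : c * a j.+2 <= c * a j.+1 - (c * a j.+1) ^+ 2.
  by have := ler_wpM2l c0 hdec; rewrite exprMn; nra.
have : 0 <= (1 - j%:R * (c * a j.+1) - c * a j.+1) * (1 - c * a j.+1) by nra.
have : 0 <= j%:R :> R by [].
nra.
Qed.

End Scalar.

Section Convexity.
Context {R : realType} {n : nat}.
Notation V := 'rV[R]_n.
Implicit Types (c u v x y : V).

Lemma convex_combB (t : R) x y c :
  t *: x + (1 - t) *: y - c = t *: (x - c) + (1 - t) *: (y - c).
Proof. by rewrite !scalerBr addrACA -opprD -scalerDl subrKC scale1r. Qed.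

Lemma convex_affine (a : R) (g c : V) : convex_fun (fun x => a + dotp g (x - c)).
Proof.
by move=> x y t _; rewrite convex_combB !dotpE; lra.
Qed.

Lemma prox_first_order (F : V -> R) (rho : R) (xk z : V) : 0 <= rho ->
  convex_fun F -> is_prox_min F rho xk z ->
  forall x, F z + rho * dotp (xk - z) (x - z) <= F x.
Proof.
move=> rho0 cF pm x; rewrite -(opprB z xk) dotpNl.
suff : 0 <= F x - F z + rho * dotp (z - xk) (x - z) by lra.
apply: (@linear_quadratic_ge0 _ _ (rho / 2 * dotp (x - z) (x - z))).
  by apply: mulr_ge0; [lra | apply: dotp_ge0].
move=> t /andP[t0 t1].
have := cF x z t; rewrite (ltW t0) t1 => /(_ isT).
have := pm (t *: x + (1 - t) *: z).
have -> : t *: x + (1 - t) *: z - xk = (z - xk) + t *: (x - z).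
  by rewrite scalerBl scale1r scalerBr addrCA addrAC.
rewrite !nrm2 (dotpDD (z - xk)) dotpZl !dotpZr.
lra.
Qed.

Lemma convex_combination_le (psi : V -> R) (K : R) (I : eqType) (s : seq I)
    (w : I -> R) (q : I -> V) (mu : R) c :
  convex_fun psi -> 0 <= mu -> psi c <= K ->
  (forall i, i \in s -> 0 <= w i /\ psi (q i) <= K) ->
  mu + \sum_(i <- s) w i = 1 ->
  psi (mu *: c + \sum_(i <- s) w i *: q i) <= K.
Proof.
move=> cP; elim: s mu c => [|i s IH] mu c mu0 Kc Ks.
  by rewrite !big_nil !addr0 => ->; rewrite scale1r.
rewrite !big_cons addrA => sum1.
have [/= wi0 Kqi] := Ks i (mem_head _ _).
have {}Ks j : j \in s -> 0 <= w j /\ psi (q j) <= K.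
  by move=> js; apply: Ks; rewrite in_cons js orbT.
rewrite addrA; have [ml0|ml_neq0] := eqVneq (mu + w i) 0.
  have [-> ->] : mu = 0 /\ w i = 0 by split; lra.
  by rewrite [0 *: q i]scale0r addr0; apply: IH; rewrite // -sum1 ml0.
have ml_gt0 : 0 < mu + w i by rewrite lt_def ml_neq0; lra.
pose t := mu / (mu + w i).
have t1 : 1 - t = w i / (mu + w i) by rewrite /t; field.
have -> : mu *: c + w i *: q i = (mu + w i) *: (t *: c + (1 - t) *: q i).
  by rewrite t1 scalerDr !scalerA !(mulrC (mu + w i)) !divfK.
apply: IH => //; first exact: ltW ml_gt0.
have t0 : 0 <= t by rewrite divr_ge0 // ltW.
have t1' : t <= 1 by rewrite ler_pdivrMr //; lra.
apply: le_trans (cP _ _ _ (introT andP (conj t0 t1'))) _.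
have : t * psi c + (1 - t) * psi (q i) <= t * K + (1 - t) * K.
  by apply: lerD; apply: ler_wpM2l; lra.
lra.
Qed.

Lemma abs_coord_le (d : V) (r : R) i : dotp d d <= r -> `|d 0 i| <= 1 + `|r|.
Proof.
move=> dr; have sq : d 0 i ^+ 2 <= dotp d d.
  by rewrite /dotp (bigD1 i) //= expr2 lerDl sumr_ge0 // => j _; rewrite -expr2 sqr_ge0.
have : `|d 0 i| ^+ 2 <= `|r|.
  by rewrite real_normK ?num_real // (le_trans sq (le_trans dr (ler_norm r))).
by have := normr_ge0 (d 0 i); nra.
Qed.

(* psi is bounded on the ball by its values at the vertices c +- C e_i of a
   cross-polytope containing it. *)
Lemma convex_bounded_ball (psi : V -> R) c (r : R) : convex_fun psi ->
  exists K, forall x, dotp (x - c) (x - c) <= r -> psi x <= K.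
Proof.
move=> cP; pose C := n%:R * (1 + `|r|) + 1.
have C0 : 0 < C by rewrite /C ltr_pwDr // mulr_ge0 // addr_ge0.
pose sg (d : V) (i : 'I_n) := if 0 <= d 0 i then C else - C.
exists (\big[Num.max/psi c]_(i < n)
          Num.max (psi (c + C *: 'e_i)) (psi (c + (- C) *: 'e_i))).
move=> x xr; pose d := x - c; pose w i := `|d 0 i| / C; pose q i := c + sg d i *: 'e_i.
have wsg i : w i * sg d i = d 0 i.
  by rewrite /w /sg; case: ifP => [/ger0_norm|/negbT]; [|rewrite -ltNge => /ltr0_norm];
     move=> ->; field; rewrite lt0r_neq0.
have -> : x = (1 - \sum_(i < n) w i) *: c + \sum_(i < n) w i *: q i.
  have qE i : w i *: q i = w i *: c + d 0 i *: 'e_i by rewrite scalerDr scalerA wsg.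
  rewrite (eq_bigr _ (fun i _ => qE i)) big_split /= -scaler_suml addrA -scalerDl.
  by rewrite subrK scale1r -row_sum_delta /d addrC subrK.
apply: convex_combination_le => //.
- rewrite subr_ge0 /w -mulr_suml ler_pdivrMr // mul1r.
  apply: le_trans (ler_sum _ (fun i _ => abs_coord_le _ _ i xr)) _.
  by rewrite sumr_const card_ord -mulr_natl lerDl.
- exact: bigmax_ge_id.
- move=> i _; split; first by rewrite divr_ge0 // ltW.
  apply: le_trans (le_bigmax _ _ i); rewrite le_max /q /sg.
  by case: ifP => _; rewrite lexx ?orbT.
- by rewrite subrK.
Qed.

Lemma subdiff_nrm_le (m : R) (f : V -> R) z v (K : R) : 0 <= m ->
  subdiff m f z v -> (forall y, dotp (y - z) (y - z) <= 1 -> f y <= K) ->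
  nrm v <= K - f z + m / 2.
Proof.
move=> m0 sub fK; have fzK : f z <= K by apply: fK; rewrite subrr dotp00 ler01.
have [v0|v_neq0] := eqVneq (nrm v) 0; first by rewrite v0; lra.
pose u := (nrm v)^-1 *: v.
have vu : dotp v u = nrm v by rewrite dotpZr -nrm2; field.
have uu : dotp u u = 1 by rewrite dotpZl dotpZr -nrm2; field.
have yz : z + u - z = u by rewrite addrAC subrr add0r.
have := sub (z + u); have := fK (z + u); rewrite yz nrm2 vu uu.
by move=> /(_ (lexx _)); lra.
Qed.

End Convexity.

Section ProxDescent.
Context {R : realType} {n : nat} {m : R} {f : 'rV[R]_n -> R} {beta rho : R}
  {xk : 'rV[R]_n} {g : nat -> 'rV[R]_n} {ft : nat -> 'rV[R]_n -> R}
  {z : nat -> 'rV[R]_n}.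
Hypotheses (m_ge0 : 0 <= m) (f_wconvex : weakly_convex m f)
  (beta01 : 0 < beta < 1) (rho_gt0 : 0 < rho)
  (run : prox_descent_run f m beta rho xk g ft z)
  (moreau_gap_gt0 : 0 < f xk - moreau f (m + rho) xk).

Notation loops := (loop_cont f m beta xk ft z).
Notation G1 := (dotp (g 1) (g 1)).

(* lra and nra ignore section hypotheses, so the proofs below copy the ones
   they need into the local context. *)

(* The model ft j has been built: the loop test succeeded at 1, ..., j - 1. *)
Definition reached j := (1 <= j)%N /\ forall i, (1 <= i < j)%N -> loops i.

Definition prox_value j := ft j (z j.+1) + rho / 2 * nrm (z j.+1 - xk) ^+ 2.

Definition model_gap j := f xk - prox_value j.

Lemma reached1 : reached 1.
Proof. by split=> // -[|i]. Qed.

Lemma reachedS j : reached j -> loops j -> reached j.+1.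
Proof.
case=> j1 hl lj; split=> [|i /andP[i1]]; first exact: leqW.
by rewrite ltnS leq_eqVlt => /orP[/eqP-> //|ij]; apply: hl; rewrite i1.
Qed.

Lemma reached_le i j : (1 <= i <= j)%N -> reached j -> reached i.
Proof.
move=> /andP[i1 ij] [_ hl]; split=> // k /andP[k1 ki]; apply: hl.
by rewrite k1 (leq_trans ki ij).
Qed.

Lemma reached_prev j : (1 <= j)%N -> reached j.+1 -> reached j.
Proof. by move=> j1; apply: reached_le; rewrite j1 leqnSn. Qed.

Lemma reached_loops j : (1 <= j)%N -> reached j.+1 -> loops j.
Proof. by move=> j1 [_ hl]; apply: hl; rewrite j1 ltnSn. Qed.

Lemma reached_cuts j : (1 <= j)%N -> reached j.+1 ->
  [/\ subdiff m f (z j.+1) (g j.+1 - m *: (z j.+1 - xk)),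
      forall x, ft j (z j.+1) + dotp (rho *: (xk - z j.+1)) (x - z j.+1) <= ft j.+1 x
    & forall x, f (z j.+1) + m / 2 * nrm (z j.+1 - xk) ^+ 2
                  + dotp (g j.+1) (x - z j.+1) <= ft j.+1 x].
Proof.
move=> j1 [_ hl]; have [_ _ _ step] := run.
by have [? [_ [_ [? [? _]]]]] := step j j1 hl; split.
Qed.

Lemma reached_model j : reached j ->
  [/\ convex_fun (ft j), forall x, ft j x <= f x + m / 2 * nrm (x - xk) ^+ 2
    & is_prox_min (ft j) rho xk (z j.+1)].
Proof.
have [sub1 ft1 pm1 step] := run.
case: j => [[//]|[_|j [_ hl]]]; last by have [_ [? [? [_ [_ ?]]]]] := step j.+1 isT hl.
split=> // [x y t t01|x]; first by rewrite !ft1; apply: convex_affine.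
by rewrite ft1; have := sub1 x; lra.
Qed.

Lemma prox_value_le_moreau j : reached j -> prox_value j <= moreau f (m + rho) xk.
Proof.
case/reached_model=> _ ft_le pm; apply: lb_le_inf.
  by exists (f xk + (m + rho) / 2 * nrm (xk - xk) ^+ 2), xk.
by move=> _ [y _ <-]; have := pm y; have := ft_le y; rewrite /prox_value; lra.
Qed.

Lemma moreau_gap_le j : reached j -> f xk - moreau f (m + rho) xk <= model_gap j.
Proof. by move/prox_value_le_moreau; rewrite /model_gap; lra. Qed.

Lemma model_gap_gt0 j : reached j -> 0 < model_gap j.
Proof. by move/moreau_gap_le; apply: lt_le_trans. Qed.

Lemma prox_first_order_xk j : reached j ->
  ft j (z j.+1) + rho * dotp (z j.+1 - xk) (z j.+1 - xk) <= f xk.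
Proof.
case/reached_model=> cvx ft_le pm.
have := prox_first_order _ _ _ _ (ltW rho_gt0) cvx pm xk; have := ft_le xk.
by rewrite -[z j.+1 - xk]opprB dotpNN subrr nrm2 dotp00; lra.
Qed.

Lemma prox_value_le j : (1 <= j)%N -> reached j.+1 -> prox_value j <= prox_value j.+1.
Proof.
move=> j1 rj; have [_ cut _] := reached_cuts j j1 rj.
have := cut (z j.+2); have := mulr_ge0 (ltW rho_gt0) (dotp_ge0 (z j.+2 - z j.+1)).
rewrite /prox_value.
have -> : z j.+2 - xk = (z j.+1 - xk) + (z j.+2 - z j.+1) by rewrite [RHS]addrC addrA subrK.
rewrite !nrm2 (dotpDD (z j.+1 - xk)) -(opprB (z j.+1) xk) dotpZl dotpNl; lra.
Qed.

Lemma model_gap1_le : 2 * rho * model_gap 1 <= G1.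
Proof.
have [_ ft1 _ _] := run; have := dotp_ge0 (g 1 + rho *: (z 2 - xk)).
by rewrite /model_gap /prox_value ft1 nrm2 dotpDD !dotpE => ?; nra.
Qed.

Lemma model_gap_le j : reached j -> 2 * rho * model_gap j <= G1.
Proof.
elim: j => [[//]|[_ _|j IH rj]]; first exact: model_gap1_le.
apply: le_trans (IH (reached_prev j.+1 isT rj)).
apply: ler_wpM2l; first by rewrite mulr_ge0 // ltW.
by have := prox_value_le j.+1 isT rj; rewrite /model_gap; lra.
Qed.

Lemma trial_dist_le j : reached j ->
  rho ^+ 2 * dotp (z j.+1 - xk) (z j.+1 - xk) <= G1.
Proof.
move=> rj; have := model_gap_le j rj.
have := ler_wpM2l (mulr_ge0 (ler0n R 2) (ltW rho_gt0)) (prox_first_order_xk j rj).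
by rewrite /model_gap /prox_value nrm2; lra.
Qed.

Definition model_error j := f (z j.+1) + m / 2 * nrm (z j.+1 - xk) ^+ 2 - ft j (z j.+1).

Lemma model_error_ge j : (1 <= j)%N -> reached j.+1 ->
  (1 - beta) * model_gap j <= model_error j.
Proof.
move=> j1 rj; have /andP[_ beta1] := beta01.
have := reached_loops j j1 rj; rewrite /loop_cont.
have : 0 <= (1 - beta) * (rho / 2 * nrm (z j.+1 - xk) ^+ 2).
  by apply: mulr_ge0; [lra | apply: mulr_ge0; [have := rho_gt0; lra | exact: sqr_ge0]].
by rewrite /model_error /model_gap /prox_value; lra.
Qed.

(* Aggregating the two cuts with weights 1 - l and l bounds the new
   subproblem from below; minimizing over the step gives a Young term. *)
Lemma prox_value_increase j l : (1 <= j)%N -> reached j.+1 -> 0 <= l <= 1 ->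
  l * model_error j - l ^+ 2 * (dotp (g j.+1 + rho *: (z j.+1 - xk))
                                     (g j.+1 + rho *: (z j.+1 - xk)) / (2 * rho))
    <= prox_value j.+1 - prox_value j.
Proof.
move=> j1 rj /andP[l0 l1]; have [_ cut_prox cut_sub] := reached_cuts j j1 rj.
have := dotp_young (g j.+1 + rho *: (z j.+1 - xk)) (z j.+2 - z j.+1) l rho rho_gt0.
have := ler_wpM2l l0 (cut_sub (z j.+2)).
have l1' : 0 <= 1 - l by rewrite subr_ge0.
have := ler_wpM2l l1' (cut_prox (z j.+2)); rewrite /prox_value /model_error.
set W := dotp (g j.+1 + _) _; set a := z j.+1 - xk; set d := z j.+2 - z j.+1.
have -> : z j.+2 - xk = a + d by rewrite [RHS]addrC addrA subrK.
have -> : xk - z j.+1 = - a by rewrite opprB.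
rewrite !nrm2 (dotpDD a) (dotpDl (g j.+1)) !dotpZl dotpNl.
lra.
Qed.

Lemma model_gap_decrease j (G : R) : (1 <= j)%N -> reached j.+1 ->
  nrm (g 1) <= G -> nrm (g j.+1) <= G ->
  model_gap j.+1 <= model_gap j - (1 - beta) ^+ 2 * rho / (8 * G ^+ 2) * model_gap j ^+ 2.
Proof.
move=> j1 rj g1G gjG; have rj' := reached_prev j j1 rj.
have rho0 := rho_gt0; have /andP[beta0 beta1] := beta01.
have gap0 := model_gap_gt0 j rj'; have gapG1 := model_gap_le j rj'.
have G1G := dotp_le_sqr _ _ g1G; have GjG := dotp_le_sqr _ _ gjG.
have G0 : 0 < G by have := nrm_ge0 (g 1); nra.
have WG : dotp (g j.+1 + rho *: (z j.+1 - xk)) (g j.+1 + rho *: (z j.+1 - xk))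
           <= 4 * G ^+ 2.
  have := dotpDD_le (g j.+1) (rho *: (z j.+1 - xk)); have := trial_dist_le j rj'.
  by rewrite !dotpE; lra.
suff : ((1 - beta) * model_gap j) ^+ 2 / (4 * (2 * G ^+ 2 / rho))
         <= model_gap j - model_gap j.+1.
  have -> : ((1 - beta) * model_gap j) ^+ 2 / (4 * (2 * G ^+ 2 / rho))
          = (1 - beta) ^+ 2 * rho / (8 * G ^+ 2) * model_gap j ^+ 2.
    by field; rewrite !gt_eqF.
  lra.
apply: concave_quadratic_max_le.
- by rewrite divr_gt0 // mulr_gt0 // exprn_gt0.
- apply/andP; split; first by apply: mulr_ge0; lra.
  by rewrite mulrA ler_pdivlMr //; nra.
move=> l l01.
have W_le : dotp (g j.+1 + rho *: (z j.+1 - xk)) (g j.+1 + rho *: (z j.+1 - xk))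
              / (2 * rho) <= 2 * G ^+ 2 / rho.
  rewrite [X in _ <= X](_ : _ = 4 * G ^+ 2 / (2 * rho)); last by field; rewrite gt_eqF.
  by rewrite ler_wpM2r // invr_ge0; lra.
have := ler_wpM2l (sqr_ge0 l) W_le.
have /andP[l0 _] := l01.
have := ler_wpM2l l0 (model_error_ge j j1 rj).
have := prox_value_increase j l j1 rj l01.
by rewrite /model_gap; lra.
Qed.

Lemma iterations_le T (G : R) :
  reached T -> (forall j, (1 <= j <= T)%N -> nrm (g j) <= G) ->
  T%:R <= 8 * G ^+ 2 / ((1 - beta) ^+ 2 * rho * (f xk - moreau f (m + rho) xk)).
Proof.
move=> rT gG; have T1 := rT.1; have rho0 := rho_gt0; have Delta0 := moreau_gap_gt0.
have /andP[beta0 beta1] := beta01.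
have G1G : G1 <= G ^+ 2 by apply: dotp_le_sqr; apply: gG; rewrite leqnn.
have G0 : 0 < G ^+ 2.
  have := model_gap_gt0 1 reached1; have := model_gap_le 1 reached1; nra.
pose c := (1 - beta) ^+ 2 * rho / (8 * G ^+ 2).
have c0 : 0 <= c by rewrite /c !mulr_ge0 ?sqr_ge0 ?invr_ge0 //; lra.
have cgap j : (1 <= j <= T)%N -> 0 <= c * model_gap j <= 1.
  move=> jT; have rj := reached_le j T jT rT.
  have := model_gap_gt0 j rj; have := model_gap_le j rj => gapG1 gap0.
  rewrite mulr_ge0 ?(ltW gap0) //= /c mulrAC ler_pdivrMr ?mul1r; last by lra.
  have : (1 - beta) ^+ 2 <= 1 by rewrite expr_le1 //; lra.
  nra.
have dec j : (1 <= j < T)%N -> model_gap j.+1 <= model_gap j - c * model_gap j ^+ 2.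
  move=> /andP[j1 jT]; apply: model_gap_decrease => //.
  - exact: reached_le j.+1 T jT rT.
  - by apply: gG; rewrite T1.
  - exact: gG.
have := sqr_decay_bound model_gap c T c0 cgap dec; have := moreau_gap_le T rT.
set Delta := f xk - moreau f (m + rho) xk => DeltaT cT.
have TcD : T%:R * (c * Delta) <= 1.
  by apply: le_trans cT; rewrite ler_wpM2l // ler_wpM2l.
have G_neq0 : G != 0 by apply: contraTneq G0 => ->; rewrite expr0n ltxx.
have P0 : 0 < (1 - beta) ^+ 2 * rho * Delta.
  by apply: mulr_gt0 => //; apply: mulr_gt0 => //; apply: exprn_gt0; lra.
rewrite ler_pdivlMr //.
have -> : T%:R * ((1 - beta) ^+ 2 * rho * Delta) = 8 * G ^+ 2 * (T%:R * (c * Delta)).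
  by rewrite /c; field.
by rewrite ger_pMr //; lra.
Qed.

Lemma subgradients_bounded : exists G, forall j, reached j -> nrm (g j) <= G.
Proof.
have rho0 := rho_gt0; have [sub1 _ _ _] := run.
have m2_ge0 : 0 <= m / 2 by have := m_ge0; lra.
pose s := G1 / rho ^+ 2.
have dist j : reached j -> dotp (z j.+1 - xk) (z j.+1 - xk) <= s.
  by move=> rj; rewrite /s ler_pdivlMr ?exprn_gt0 // mulrC trial_dist_le.
have [K fK] := convex_bounded_ball _ xk (2 * s + 2) f_wconvex.
pose L := f xk - (G1 + s) / 2 - m / 2 * s.
have L_le j : reached j -> L <= f (z j.+1).
  move=> rj; have := sub1 (z j.+1); have := dotp_ge_sqr (g 1) (z j.+1 - xk).
  have := ler_wpM2l m2_ge0 (dist j rj).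
  by have := dist j rj; rewrite nrm2 /L; lra.
have le_K j : reached j -> forall y, dotp (y - z j.+1) (y - z j.+1) <= 1 -> f y <= K.
  move=> rj y yz; have := dotpDD_le (y - z j.+1) (z j.+1 - xk).
  rewrite addrA subrK => yxk; have := mulr_ge0 m2_ge0 (sqr_ge0 (nrm y)).
  by have := fK y; have := dist j rj; lra.
pose B := K - L + m / 2.
exists (Num.sqrt (G1 + 2 * B ^+ 2 + 2 * (m ^+ 2 * s))).
case=> [[//]|[_|j rj]]; apply: ler_wsqrtr.
  have := mulr_ge0 (sqr_ge0 m) (le_trans (dotp_ge0 _) (dist 1%N reached1)).
  by have := sqr_ge0 B; lra.
have rj' := reached_prev j.+1 isT rj; have [sub _ _] := reached_cuts j.+1 isT rj.
have v_le : nrm (g j.+2 - m *: (z j.+2 - xk)) <= B.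
  apply: le_trans (subdiff_nrm_le _ _ _ _ _ m_ge0 sub (le_K j.+1 rj')) _.
  by have := L_le j.+1 rj'; rewrite /B; lra.
have := dotpDD_le (g j.+2 - m *: (z j.+2 - xk)) (m *: (z j.+2 - xk)).
rewrite subrK dotpZl dotpZr.
have := dotp_le_sqr _ _ v_le; have := ler_wpM2l (sqr_ge0 m) (dist j.+1 rj').
have := dotp_ge0 (g 1); lra.
Qed.

Lemma loop_terminates : exists2 T, reached T & ~ loops T.
Proof.
case: (pselect (exists2 T, reached T & ~ loops T)) => [//|no_exit]; exfalso.
have reached_all j : reached j.+1.
  elim: j => [|j IH]; first exact: reached1.
  apply: (reachedS j.+1 IH); have [//|not_loop] := pselect (loops j.+1).
  by case: no_exit; exists j.+1.
have [G gG] := subgradients_bounded.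
have T_le T : reached T ->
    T%:R <= 8 * G ^+ 2 / ((1 - beta) ^+ 2 * rho * (f xk - moreau f (m + rho) xk)).
  move=> rT; apply: (iterations_le T G rT) => i iT.
  exact: gG (reached_le i T iT rT).
set B := 8 * G ^+ 2 / _ in T_le.
have B_ge0 : 0 <= B by apply: le_trans (T_le 1%N reached1).
have := T_le _ (reached_all (Num.Def.archi_bound B)); have := archi_boundP B_ge0.
by rewrite -natr1; lra.
Qed.
End ProxDescent.

Theorem mainTheorem8 (R : realType) (n : nat) (m : R) (f : 'rV[R]_n -> R)
    (beta rho : R) (xk : 'rV[R]_n)
    (g : nat -> 'rV[R]_n) (ft : nat -> 'rV[R]_n -> R) (z : nat -> 'rV[R]_n) :
  0 <= m -> weakly_convex m f ->
  0 < beta < 1 -> 0 < rho ->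
  prox_descent_run f m beta rho xk g ft z ->
  0 < f xk - moreau f (m + rho) xk ->
  exists T : nat,
    [/\ (1 <= T)%N,
        (forall j : nat, (1 <= j < T)%N -> loop_cont f m beta xk ft z j),
        ~ loop_cont f m beta xk ft z T &
        T%:R <= 8 * (\big[Num.max/0]_(1 <= j < T.+1) nrm (g j)) ^+ 2
                / ((1 - beta) ^+ 2 * rho * (f xk - moreau f (m + rho) xk))].
Proof.
move=> m_ge0 f_wconvex beta01 rho_gt0 run gap_gt0.
have [T rT T_exit] := loop_terminates m_ge0 f_wconvex beta01 rho_gt0 run gap_gt0.
have [T1 T_loops] := rT; exists T; split=> //.
apply: (iterations_le beta01 rho_gt0 run gap_gt0 T _ rT) => j jT.
have jT1 : j \in index_iota 1 T.+1 by rewrite mem_index_iota ltnS.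
exact: (le_bigmax_seq 0 j xpredT (fun i => nrm (g i)) jT1 isT).
Qed.
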